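(* Let $F$ and $p$ be positive integers. If $(d_1,d_2,\dots,d_p)$ is a $\mathrm{Sat}(F)$-sequence and $t_1,\dots,t_p$ are positive integers such that $t_1d_1+\cdots+t_pd_p<F$ and $\gcd\{d_i/d_{i+1},\,t_{i+1}\}=1$ for all $i\in\{1,\dots,p-1\}$, then $$\{d_1,\ t_1d_1+t_2d_2,\ \dots,\ t_1d_1+t_2d_2+\cdots+t_pd_p\}$$ is the minimal $\mathrm{Sat}(F)$-system of generators of an element of $\mathrm{Sat}(F)$ whose $\mathrm{Sat}(F)$-rank equals $p$. Moreover, every minimal $\mathrm{Sat}(F)$-system of generators of an element of $\mathrm{Sat}(F)$ with $\mathrm{Sat}(F)$-rank $p$ is of this form for some such $\mathrm{Sat}(F)$-sequence $(d_1,\dots,d_p)$ and positive integers $t_1,\dots,t_p$.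
   Context: A numerical semigroup is a subset $S\subseteq\mathbb{N}$ closed under addition, containing $0$, with $\mathbb{N}\setminus S$ finite; its Frobenius number $\mathrm{F}(S)$ is the largest integer not in $S$. For $A\subseteq\mathbb{N}$ and $a\in A$, let $\mathrm{d}_A(a)=\gcd\{x\in A\mid x\le a\}$. A numerical semigroup $S$ is saturated if $s+\mathrm{d}_S(s)\in S$ for all $s\in S\setminus\{0\}$. For a positive integer $F$, $\mathrm{Sat}(F)$ denotes the set of all saturated numerical semigroups $S$ with $\mathrm{F}(S)=F$. Let $\Delta(F+1)=\{0\}\cup\{x\in\mathbb{N}\mid x\ge F+1\}$. A set $X\subseteq\mathbb{N}$ is a $\mathrm{Sat}(F)$-set if $X\cap\Delta(F+1)=\emptyset$ and there exists $S\in\mathrm{Sat}(F)$ with $X\subseteq S$. For a $\mathrm{Sat}(F)$-set $X$, $\mathrm{Sat}(F)[X]$ denotes the intersection of all elements of $\mathrm{Sat}(F)$ containing $X$ (the smallest element of $\mathrm{Sat}(F)$ containing $X$). If $S=\mathrm{Sat}(F)[X]$, $X$ is a $\mathrm{Sat}(F)$-system of generators of $S$; it is minimal if $S\neq\mathrm{Sat}(F)[Y]$ for every proper subset $Y\subsetneq X$. Every $S\in\mathrm{Sat}(F)$ has a unique minimal $\mathrm{Sat}(F)$-system of generators, and its cardinality is the $\mathrm{Sat}(F)$-rank of $S$. For $k\ge1$, a $\mathrm{Sat}(F)$-sequence of length $k$ is a sequence of positive integers $(d_1,\dots,d_k)$ with $d_1>d_2>\cdots>d_k$, $d_{i+1}\mid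 d_i$ for all $i\in\{1,\dots,k-1\}$, and $d_k\nmid F$. *)

From mathcomp Require Import all_boot.
Set Implicit Arguments. Unset Strict Implicit. Unset Printing Implicit Defensive.

Definition is_num_semigroup (S : pred nat) : Prop :=
  [/\ S 0, (forall x y, S x -> S y -> S (x + y)) & exists N, forall x, N <= x -> S x].

Definition frobenius_is (S : pred nat) (F : nat) : Prop :=
  ~~ S F /\ (forall x, F < x -> S x).

Definition dA (A : pred nat) (a : nat) : nat :=
  \big[gcdn/0]_(0 <= x < a.+1 | A x) x.

Definition saturated (S : pred nat) : Prop :=
  forall s, S s -> s != 0 -> S (s + dA S s).

Definition inSat (F : nat) (S : pred nat) : Prop :=
  [/\ is_num_semigroup S, saturated S & frobenius_is S F].

Definition SatSet (F : nat) (X : pred nat) : Prop :=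
  (forall x, X x -> ~~ ((x == 0) || (F.+1 <= x))) /\
  exists S, inSat F S /\ {subset X <= S}.

Definition SatGen (F : nat) (X S : pred nat) : Prop :=
  [/\ SatSet F X, inSat F S, {subset X <= S} &
      forall T, inSat F T -> {subset X <= T} -> {subset S <= T}].

Definition minimal_SatGen (F : nat) (X S : pred nat) : Prop :=
  SatGen F X S /\
  forall Y : pred nat, {subset Y <= X} -> (exists x, X x && ~~ Y x) -> ~ SatGen F Y S.

(* Cardinality of a subset of {0,..,F} (Sat(F)-sets lie in [1,F]). *)
Definition cardF (F : nat) (X : pred nat) : nat := count X (iota 0 F.+1).

Definition Sat_rank (F : nat) (S : pred nat) (r : nat) : Prop :=
  exists X, minimal_SatGen F X S /\ cardF F X = r.

(* (d_1,...,d_p) is a Sat(F)-sequence; indices shifted to 0..p-1. *)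
Definition SatSeq (F p : nat) (d : nat -> nat) : Prop :=
  [/\ forall i, i < p -> 0 < d i,
      forall i, i.+1 < p -> d i.+1 < d i,
      forall i, i.+1 < p -> d i.+1 %| d i &
      ~~ (d p.-1 %| F)].

Definition partial_sum (d t : nat -> nat) (k : nat) : nat :=
  \sum_(i < k.+1) t i * d i.

(* The set {d_1, t_1 d_1 + t_2 d_2, ..., t_1 d_1 + ... + t_p d_p}
   (indices shifted to 0..p-1; note the first element is d_1 itself). *)
Definition gens (p : nat) (d t : nat -> nat) : pred nat :=
  fun x => (x == d 0) || has (fun k => x == partial_sum d t k) (iota 1 p.-1).

(* Everything is organised around the explicit closure
     closure F X = {0} u (F, oo) u { x | 0 < d_X(x) and d_X(x) divides x }.
   1. Elementary facts on d_A(a), the gcd of the elements of A up to a: its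
      one-step recursion, its divisors, and its constancy on gaps of A.
   2. closure F X is contained in every saturated set containing X and is itself
      in Sat(F) as soon as it misses F; hence Sat(F)[X] = closure F X.
   3. Call x in X redundant when 0 < d_X(x-1) divides x, i.e. x is generated by
      the smaller elements of X.  A Sat(F)-set is a minimal system iff none of its
      elements is redundant, and the minimal system of S is unique.
   4. Existence: the prescribed generators n_0 < ... < n_(p-1) < F satisfy
      d_k | n_j for j <= k but d_k does not divide n_(k+1) (by coprimality), so
      none is redundant and F lies outside their closure.
   5. Converse: list a minimal system increasingly as n_0 < ... < n_(p-1); then
      d_k := d_X(n_k) = gcd(d_(k-1), n_k) and t_(k+1) := (n_(k+1) - n_k) / d_(k+1)
      have all the required properties. *)

From mathcomp Require Import all_boot zify.
Set Implicit Arguments. Unset Strict Implicit. Unset Printing Implicit Defensive.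

Section InitialGcd.
Variable A : pred nat.

Lemma dA0 : dA A 0 = 0.
Proof. by rewrite /dA big_mkcond big_nat1; case: (A 0). Qed.

Lemma dAS a : dA A a.+1 = if A a.+1 then gcdn (dA A a) a.+1 else dA A a.
Proof. by rewrite /dA big_mkcond big_nat_recr //= -big_mkcond; case: (A a.+1); rewrite ?gcdn0. Qed.

Lemma dA_mem a : A a -> 0 < a -> dA A a = gcdn (dA A a.-1) a.
Proof. by case: a => // a Aa _; rewrite dAS Aa. Qed.

Lemma dvdn_dA a e : e %| dA A a <-> (forall x, x <= a -> A x -> e %| x).
Proof.
elim: a => [|a IH]; rewrite ?dA0 ?dAS.
  by split=> [_ x|_]; rewrite ?leqn0 ?dvdn0 // => /eqP->.
have split_le x : x <= a.+1 = (x <= a) || (x == a.+1) by rewrite leq_eqVlt orbC ltnS.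
case Aa: (A a.+1); rewrite ?dvdn_gcd; split.
- by case/andP=> /IH H ea x; rewrite split_le => /orP[/H|/eqP->].
- by move=> H; apply/andP; split; [apply/IH => x xa; exact: H (leqW xa) | exact: H].
- by move/IH=> H x; rewrite split_le => /orP[/H//|/eqP->]; rewrite Aa.
- by move=> H; apply/IH => x xa; apply: H; apply: leqW.
Qed.

Lemma dA_dvd a x : x <= a -> A x -> dA A a %| x.
Proof. by move=> xa Ax; move: (dvdnn (dA A a)) => /dvdn_dA; apply. Qed.

Lemma dA_mono a b : a <= b -> dA A b %| dA A a.
Proof. by move=> ab; apply/dvdn_dA => x xa; apply: dA_dvd (leq_trans xa ab). Qed.

Lemma dA_gt0 a x : x <= a -> A x -> 0 < x -> 0 < dA A a.
Proof.
by move=> xa Ax; apply: contraTT; rewrite -!eqn0Ngt => /eqP h; rewrite -dvd0n -h dA_dvd.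
Qed.

Lemma dA_const a b : a <= b -> (forall x, a < x <= b -> ~~ A x) -> dA A b = dA A a.
Proof.
elim: b => [|b IH]; first by rewrite leqn0 => /eqP->.
rewrite leq_eqVlt ltnS => /orP[/eqP->//|ab] gap.
have nAb : ~~ A b.+1 by apply: gap; rewrite ltnS ab /=.
rewrite dAS (negbTE nAb); apply: IH => // x /andP[ax xb].
by apply: gap; rewrite ax (leq_trans xb).
Qed.

End InitialGcd.

Lemma dA_sub (A B : pred nat) a : {subset A <= B} -> dA B a %| dA A a.
Proof. by move=> AB; apply/dvdn_dA => x xa Ax; apply: dA_dvd xa (AB x Ax). Qed.

Lemma eq_dA (A B : pred nat) a : A =1 B -> dA A a = dA B a.
Proof. by move=> AB; apply: eq_bigl => x; rewrite AB. Qed.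

Lemma dA_gt0_mono (A : pred nat) a b : a <= b -> 0 < dA A a -> 0 < dA A b.
Proof. by move=> ab /dvdn_gt0; apply; apply: dA_mono. Qed.

Lemma dA_gt0_witness (A : pred nat) a : 0 < dA A a -> exists2 x, x <= a & A x && (0 < x).
Proof.
move=> d_gt0; have [/hasP[x]|/hasPn none] := boolP (has (fun x => A x && (0 < x)) (iota 0 a.+1)).
  by rewrite mem_iota ltnS => xa Ax; exists x.
suff : 0 %| dA A a by rewrite dvd0n => /eqP d0; rewrite d0 in d_gt0.
apply/dvdn_dA => x xa Ax; have := none x; rewrite mem_iota ltnS xa Ax.
by rewrite -eqn0Ngt => /(_ isT) /eqP ->.
Qed.

(* The candidate for Sat(F)[X]: 0, everything above F, and every x that is a
   multiple of the (positive) gcd of the elements of X up to x. *)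
Definition closure (F : nat) (X : pred nat) : pred nat :=
  fun x => (x == 0) || (F < x) || ((0 < dA X x) && (dA X x %| x)).

Lemma saturated_step (T : pred nat) z x : saturated T -> T z -> 0 < z -> z < x ->
  dA T z %| x -> exists w, [/\ z < w, w <= x & T w].
Proof.
move=> satT Tz z_gt0 zx dx; exists (z + dA T z).
have d_gt0 : 0 < dA T z := dA_gt0 (leqnn z) Tz z_gt0.
have : dA T z <= x - z by rewrite dvdn_leq ?subn_gt0 // dvdn_sub // dA_dvd.
by split; [lia | lia | apply: satT; rewrite // -lt0n].
Qed.

Section Closure.
Variables (F : nat) (X : pred nat).
Local Notation C := (closure F X).

Lemma closure_mid x : 0 < x -> x <= F -> C x = (0 < dA X x) && (dA X x %| x).
Proof. by move=> x_gt0 xF; rewrite /closure eqn0Ngt x_gt0 ltnNge xF. Qed.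

Lemma sub_closure x : X x -> C x.
Proof.
move=> Xx; rewrite /closure; case: (posnP x) => [->//|x_gt0].
by rewrite (dA_gt0 (leqnn x) Xx x_gt0) dA_dvd ?orbT.
Qed.

Lemma closure_dvd x c : x <= F -> c <= x -> C c -> dA X x %| c.
Proof.
move=> xF cx; rewrite /closure => /orP[/orP[/eqP->|Fc]|/andP[_ dc]]; first exact: dvdn0.
  by move: (leq_trans cx xF); rewrite leqNgt Fc.
exact: dvdn_trans (dA_mono X cx) dc.
Qed.

Lemma dA_closure y : y <= F -> dA C y = dA X y.
Proof.
move=> yF; apply/eqP; rewrite eqn_dvd dA_sub; last exact: sub_closure.
by apply/dvdn_dA => c cy Cc; apply: closure_dvd.
Qed.

(* Minimality: a member of Sat(F) containing X contains its closure.  For x in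
   the closure, take the largest z <= x in T; saturation forces z = x. *)
Lemma closure_least T : inSat F T -> {subset X <= T} -> {subset C <= T}.
Proof.
case=> [[T0 _ _] satT [_ TF]] XT x; rewrite /closure.
case/orP=> [/orP[/eqP->//|/TF//]|/andP[dX_gt0 dX_x]].
have [y yx /andP[Xy y_gt0]] := dA_gt0_witness dX_gt0.
pose inT z := [&& 0 < z, z <= x & T z].
have exT : exists z, inT z by exists y; apply/and3P; split => //; apply: XT.
have boundT z : inT z -> z <= x by case/and3P.
have [z /and3P[z_gt0 zx Tz] zmax] := ex_maxnP exT boundT.
have above_z w : z < w -> w <= x -> ~~ T w.
  move=> zw wx; apply/negP => Tw; have := zmax w.
  by rewrite /inT wx Tw (leq_ltn_trans _ zw) // leqNgt zw => /(_ isT).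
have dz : dA T z %| x.
  apply: dvdn_trans dX_x; apply/dvdn_dA => w wx Xw.
  case: (leqP w z) => [wz|zw]; first exact: dA_dvd wz (XT w Xw).
  by move/negP: (above_z w zw wx); case; apply: XT.
case: (ltngtP z x) zx => [zlx _|//|<- //].
have [w [zw wx Tw]] := saturated_step satT Tz z_gt0 zlx dz.
by move: (above_z w zw wx); rewrite Tw.
Qed.

Lemma closure_add x y : C x -> C y -> C (x + y).
Proof.
move=> Cx Cy; case: (posnP x) => [->//|x_gt0]; case: (posnP y) => [->|y_gt0].
  by rewrite addn0.
case: (leqP (x + y) F) => [sF|Fs]; last by rewrite /closure Fs orbT.
have [xF yF] : x <= F /\ y <= F by split; apply: leq_trans sF; rewrite ?leq_addr ?leq_addl.
move: Cx Cy; rewrite (closure_mid x_gt0 xF) (closure_mid y_gt0 yF).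
rewrite closure_mid ?addn_gt0 ?x_gt0 // => /andP[dx_gt0 dx] /andP[_ dy].
have mx := dA_mono X (leq_addr y x); have my := dA_mono X (leq_addl x y).
by rewrite (dA_gt0_mono (leq_addr y x) dx_gt0) dvdn_add ?(dvdn_trans mx dx) ?(dvdn_trans my dy).
Qed.

Lemma closure_saturated : saturated C.
Proof.
move=> s Cs; rewrite -lt0n => s_gt0.
have [sF|Fs] := leqP s F; last by rewrite /closure (ltn_addr _ Fs) orbT.
move: Cs; rewrite (dA_closure sF) (closure_mid s_gt0 sF) => /andP[d_gt0 ds].
have [tF|Ft] := leqP (s + dA X s) F; last by rewrite /closure Ft orbT.
rewrite closure_mid ?addn_gt0 ?s_gt0 // (dA_gt0_mono (leq_addr _ s) d_gt0).
by rewrite (dvdn_trans (dA_mono X (leq_addr _ s))) // dvdn_add.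
Qed.

Lemma closure_inSat : ~~ C F -> inSat F C.
Proof.
move=> nCF; split; last by split=> // x Fx; rewrite /closure Fx orbT.
  split; [by rewrite /closure eqxx | exact: closure_add |].
  by exists F.+1 => x Fx; rewrite /closure Fx orbT.
exact: closure_saturated.
Qed.

Lemma closure_SatGen : SatSet F X -> SatGen F X C.
Proof.
move=> hX; have [_ [S [S_sat XS]]] := hX; have [_ _ [nSF _]] := S_sat.
have nCF : ~~ C F by apply: contraNN nSF => CF; exact: closure_least S_sat XS F CF.
split=> //; [exact: closure_inSat | move=> x; exact: sub_closure | exact: closure_least].
Qed.

Lemma SatGen_closure S : SatGen F X S -> S =1 C.
Proof.
move=> [hX S_sat XS least] x; have [_ C_sat _ _] := closure_SatGen hX.
apply/idP/idP => [Sx|Cx]; last exact: closure_least S_sat XS x Cx.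
by apply: (least _ C_sat) Sx => y; apply: sub_closure.
Qed.

Lemma SatGen_dA S y : SatGen F X S -> y <= F -> dA S y = dA X y.
Proof. by move=> hG yF; rewrite (eq_dA _ (SatGen_closure hG)) dA_closure. Qed.

End Closure.

Lemma SatSet_bound F (X : pred nat) x : SatSet F X -> X x -> 0 < x <= F.
Proof. by case=> small _ /small; rewrite negb_or -lt0n -ltnNge ltnS. Qed.

Lemma SatSet_sub F (X Y : pred nat) : SatSet F X -> {subset Y <= X} -> SatSet F Y.
Proof.
move=> [small [S [S_sat XS]]] YX; split; first by move=> y /YX /small.
by exists S; split=> // y /YX /XS.
Qed.

(* x is redundant in X when it already lies in the closure of the elements of X
   smaller than x. *)
Definition redundant (X : pred nat) (x : nat) : bool :=
  (0 < dA X x.-1) && (dA X x.-1 %| x).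

Lemma redundant_sub (X Y : pred nat) x : {subset Y <= X} -> redundant Y x -> redundant X x.
Proof.
move=> YX /andP[d_gt0 dx]; have dXY := dA_sub x.-1 YX.
by rewrite /redundant (dvdn_gt0 d_gt0 dXY) (dvdn_trans dXY dx).
Qed.

Lemma closure_redundant F (X : pred nat) x :
  0 < x <= F -> ~~ X x -> closure F X x -> redundant X x.
Proof.
case: x => // x /= xF nXx; rewrite closure_mid //.
by rewrite dAS (negbTE nXx).
Qed.

(* A Sat(F)-set without redundant elements is a minimal system of generators:
   a missing generator would be redundant with respect to the smaller set. *)
Lemma nonredundant_minimal F (X : pred nat) : SatSet F X ->
  (forall x, X x -> ~~ redundant X x) -> minimal_SatGen F X (closure F X).
Proof.
move=> hX indep; split; first exact: closure_SatGen.
move=> Y YX [x /andP[Xx nYx]] hY; apply: (negP (indep x Xx)).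
apply: (redundant_sub YX); apply: closure_redundant nYx _; first exact: SatSet_bound hX Xx.
by rewrite -(SatGen_closure hY); apply: sub_closure.
Qed.

(* Conversely, a redundant generator could be dropped without changing any gcd,
   hence without changing the closure. *)
Lemma minimal_nonredundant F (X S : pred nat) x :
  minimal_SatGen F X S -> X x -> ~~ redundant X x.
Proof.
move=> [hG hmin] Xx; apply/negP => /andP[d_gt0 dx]; have [hX S_sat XS _] := hG.
have /andP[x_gt0 _] := SatSet_bound hX Xx.
pose Y := [pred y | X y && (y != x)].
have YX : {subset Y <= X} by move=> y /andP[].
have dAY z : dA Y z = dA X z.
  apply/eqP; rewrite eqn_dvd (dA_sub z YX) andbT; apply/dvdn_dA => w wz Xw.
  have [wx|wx] := eqVneq w x; last by apply: dA_dvd; rewrite // /Y /= Xw.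
  rewrite wx in wz *; apply: dvdn_trans dx; apply/dvdn_dA => v vx Xv.
  have vltx : v < x by rewrite -(prednK x_gt0) ltnS.
  apply: dA_dvd; first exact: leq_trans (ltnW vltx) wz.
  by rewrite /Y /= Xv ltn_eqF.
apply: (hmin Y YX); first by exists x; rewrite /Y /= Xx eqxx.
split; [exact: SatSet_sub hX YX | exact: S_sat | by move=> y /YX /XS |].
move=> T T_sat YT y Sy; apply: (closure_least T_sat YT).
have : closure F X y by rewrite -(SatGen_closure hG).
by rewrite /closure -dAY.
Qed.

(* Two minimal systems of the same semigroup: an element of the first is a
   generator of the second, since otherwise it would be redundant in both. *)
Lemma minimal_sub F (X Y S : pred nat) x :
  minimal_SatGen F X S -> minimal_SatGen F Y S -> X x -> Y x.
Proof.
move=> hX hY Xx; apply: contraTT (minimal_nonredundant hX Xx) => nYx.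
have [[hXset _ XS _] _] := hX; have Sx : S x := XS x Xx.
have /andP[x_gt0 xF] := SatSet_bound hXset Xx.
have x1F : x.-1 <= F := leq_trans (leq_pred x) xF.
have : redundant Y x.
  apply: (@closure_redundant F); rewrite ?x_gt0 //.
  by rewrite -(SatGen_closure hY.1).
by rewrite negbK /redundant -(SatGen_dA hY.1 x1F) (SatGen_dA hX.1 x1F).
Qed.

Lemma minimal_unique F (X Y S : pred nat) :
  minimal_SatGen F X S -> minimal_SatGen F Y S -> X =1 Y.
Proof.
by move=> hX hY x; apply/idP/idP; [exact: minimal_sub hX hY | exact: minimal_sub hY hX].
Qed.

Definition gen_elt (d t : nat -> nat) (k : nat) : nat :=
  if k is 0 then d 0 else partial_sum d t k.

Lemma partial_sumS (d t : nat -> nat) k :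
  partial_sum d t k.+1 = partial_sum d t k + t k.+1 * d k.+1.
Proof. by rewrite /partial_sum big_ord_recr. Qed.

Lemma sum_partial (d t : nat -> nat) p :
  0 < p -> \sum_(i < p) t i * d i = partial_sum d t p.-1.
Proof. by move=> p_gt0; rewrite /partial_sum prednK. Qed.

Lemma gensP p (d t : nat -> nat) x : 0 < p ->
  reflect (exists2 k, k < p & x = gen_elt d t k) (gens p d t x).
Proof.
case: p => // p _; rewrite /gens /=; apply: (iffP orP).
  case=> [/eqP->|/hasP[k]]; first by exists 0.
  rewrite mem_iota add1n ltnS => /andP[k_gt0 kp] /eqP->.
  by exists k; [rewrite ltnS | case: k k_gt0 {kp}].
case=> -[|k] kp ->; [by left | right; apply/hasP; exists k.+1 => //].
by rewrite mem_iota add1n ltnS.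
Qed.

Lemma count_image F p (n : nat -> nat) (X : pred nat) :
  {in iota 0 p &, injective n} -> (forall k, k < p -> n k <= F) ->
  (forall x, X x = (x \in map n (iota 0 p))) -> count X (iota 0 F.+1) = p.
Proof.
move=> n_inj n_le hX; rewrite (eq_count hX) -size_filter.
have uniq_img : uniq (map n (iota 0 p)) by rewrite map_inj_in_uniq ?iota_uniq.
rewrite (perm_size (uniq_perm (filter_uniq _ (iota_uniq 0 F.+1)) uniq_img _)).
  by rewrite size_map size_iota.
move=> x; rewrite mem_filter andb_idr // => /mapP[k].
by rewrite !mem_iota /= !add0n ltnS => kp ->; apply: n_le.
Qed.

Section Existence.
Variables (F p : nat) (d t : nat -> nat).
Hypotheses (p_gt0 : 0 < p) (d_gt0 : forall i, i < p -> 0 < d i)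
  (d_decr : forall i, i.+1 < p -> d i.+1 < d i)
  (d_dvd : forall i, i.+1 < p -> d i.+1 %| d i) (d_last : ~~ (d p.-1 %| F))
  (t_gt0 : forall i, i < p -> 0 < t i) (sum_ltF : \sum_(i < p) t i * d i < F)
  (t_coprime : forall i, i.+1 < p -> gcdn (d i %/ d i.+1) (t i.+1) = 1).

Local Notation n := (gen_elt d t).
Local Notation X := (gens p d t).
Let below_p : {pred nat} := [pred i | i < p].

Lemma below_p_convex : {in below_p &, forall i j k, i < k < j -> k \in below_p}.
Proof. by move=> i j _ jp k /andP[_ kj]; apply: ltn_trans kj jp. Qed.

Lemma d_dvd_chain j k : j <= k -> k < p -> d k %| d j.
Proof.
move=> jk kp; have jp : j < p := leq_ltn_trans jk kp.
have := @homo_leq_in nat below_p d (fun a b => b %| a) dvdnn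
  (fun b a c ab bc => dvdn_trans bc ab) below_p_convex (fun i _ ip => d_dvd ip).
by apply.
Qed.

Lemma gen_le_partial_sum k : k < p -> n k <= partial_sum d t k.
Proof. by case: k => [p0|//]; rewrite /partial_sum big_ord1 leq_pmull ?t_gt0. Qed.

Lemma gen_step k : k.+1 < p -> n k < n k.+1.
Proof.
move=> kp; apply: leq_ltn_trans (gen_le_partial_sum (ltnW kp)) _.
by rewrite /= partial_sumS -addn1 leq_add2l muln_gt0 t_gt0 ?d_gt0.
Qed.

Lemma gen_incr j k : j < k -> k < p -> n j < n k.
Proof.
move=> jk kp; have jp : j < p := ltn_trans jk kp.
have := @homo_ltn_in nat below_p n (fun a b => a < b) ltn_trans below_p_convex
  (fun i _ ip => gen_step ip).
by apply.
Qed.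

Lemma gen_mono j k : j <= k -> k < p -> n j <= n k.
Proof. by rewrite leq_eqVlt => /orP[/eqP->//|jk] kp; apply/ltnW/gen_incr. Qed.

Lemma gen_lt_inv j k : j < p -> n j < n k -> j < k.
Proof. by move=> jp; apply: contraTT; rewrite -!leqNgt => kj; apply: gen_mono. Qed.

Lemma gen_gt0 k : k < p -> 0 < n k.
Proof. by move=> kp; apply: leq_trans (gen_mono (leq0n k) kp); apply: d_gt0. Qed.

Lemma gen_ltF k : k < p -> n k < F.
Proof.
have pp : p.-1 < p by rewrite prednK.
move=> kp; apply: leq_ltn_trans (gen_mono _ pp) _; first by rewrite -ltnS prednK.
by apply: leq_ltn_trans (gen_le_partial_sum pp) _; rewrite -sum_partial.
Qed.

Lemma d_dvd_partial_sum j k : j <= k -> k < p -> d k %| partial_sum d t j.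
Proof.
move=> jk kp; apply: dvdn_sum => i _; apply: dvdn_mull; apply: d_dvd_chain kp.
by rewrite -ltnS (leq_trans (ltn_ord i)).
Qed.

Lemma d_dvd_gen j k : j <= k -> k < p -> d k %| n j.
Proof. by case: j => [|j] jk kp; [apply: d_dvd_chain | apply: d_dvd_partial_sum]. Qed.

(* ... but not the next one: otherwise d_k / d_(k+1) would divide t_(k+1), and
   coprimality would force d_k = d_(k+1). *)
Lemma d_ndvd_gen_next k : k.+1 < p -> ~~ (d k %| n k.+1).
Proof.
move=> kp; apply/negP; rewrite /= partial_sumS dvdn_addr ?d_dvd_partial_sum ?(ltnW kp) //.
set m := d k %/ d k.+1; have dkE : m * d k.+1 = d k := divnK (d_dvd kp).
rewrite -{1}dkE dvdn_pmul2r ?d_gt0 // => m_dvd_t.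
have : m %| 1 by rewrite -(t_coprime kp) dvdn_gcd dvdnn m_dvd_t.
by rewrite dvdn1 => /eqP m1; move: (d_decr kp); rewrite -dkE m1 mul1n ltnn.
Qed.

Lemma dlast_dvd_dA y : d p.-1 %| dA X y.
Proof.
apply/dvdn_dA => x _ /(gensP _ _ _ p_gt0)[k kp ->].
by apply: d_dvd_gen; rewrite ?prednK // -ltnS prednK.
Qed.

(* The generators form a Sat(F)-set: F is not in their closure since d_(p-1)
   does not divide F. *)
Lemma gens_SatSet : SatSet F X.
Proof.
split.
  move=> x /(gensP _ _ _ p_gt0)[k kp ->].
  by rewrite negb_or -lt0n gen_gt0 //= -ltnNge ltnS ltnW ?gen_ltF.
exists (closure F X); split; last by move=> x; apply: sub_closure.
apply: closure_inSat; rewrite closure_mid ?(ltn_trans (gen_gt0 p_gt0) (gen_ltF p_gt0)) //.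
by apply/negP => /andP[_ /(dvdn_trans (dlast_dvd_dA F))]; apply/negP.
Qed.

(* No generator is redundant: nothing lies below n_0, and d_(k-1) divides
   d_X(n_k - 1) but not n_k. *)
Lemma gens_nonredundant x : X x -> ~~ redundant X x.
Proof.
case/(gensP _ _ _ p_gt0) => -[|k] kp ->.
  rewrite /redundant (@dA_const _ 0) ?dA0 // => y /andP[_ yn].
  apply/negP => /(gensP _ _ _ p_gt0)[j jp yE]; move: yn; rewrite yE.
  by rewrite -ltnS prednK ?gen_gt0 // ltnNge gen_mono.
have dk : d k %| dA X (n k.+1).-1.
  apply/dvdn_dA => y yn /(gensP _ _ _ p_gt0)[j jp yE].
  rewrite yE; apply: d_dvd_gen (ltnW kp).
  rewrite -ltnS; apply: gen_lt_inv jp _.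
  by rewrite -yE (leq_ltn_trans yn) // ltn_predL gen_gt0.
by apply/negP => /andP[_ /(dvdn_trans dk)]; apply/negP; apply: d_ndvd_gen_next.
Qed.

Lemma gens_minimal_rank :
  exists S, [/\ inSat F S, minimal_SatGen F X S & Sat_rank F S p].
Proof.
have hmin := nonredundant_minimal gens_SatSet gens_nonredundant.
exists (closure F X); split=> //; first by case: hmin => -[].
exists X; split=> //; apply: (@count_image F p n).
- move=> j k; rewrite !mem_iota /= !add0n => jp kp njk.
  case: (ltngtP j k) => // jk; last by have := gen_incr jk jp; rewrite njk ltnn.
  by have := gen_incr jk kp; rewrite njk ltnn.
- by move=> k kp; apply/ltnW/gen_ltF.
by move=> x; apply/(gensP _ _ _ p_gt0)/mapP => -[k kp xE]; exists k; rewrite // mem_iota in kp *.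
Qed.

End Existence.

Section Converse.
Variables (F p : nat) (X S : pred nat).
Hypotheses (p_gt0 : 0 < p) (X_min : minimal_SatGen F X S) (X_card : cardF F X = p).

Let X_gen : SatGen F X S := X_min.1.
Let s := [seq x <- iota 0 F.+1 | X x].
Local Notation n k := (nth 0 s k).
Local Notation d k := (dA X (n k)).

Lemma size_s : size s = p.
Proof. by rewrite size_filter. Qed.

Lemma enum_incr j k : j < k -> k < p -> n j < n k.
Proof.
move=> jk kp; apply: (sorted_ltn_nth ltn_trans); rewrite ?inE /= ?size_s //.
  by apply: sorted_filter; [exact: ltn_trans | exact: iota_ltn_sorted].
exact: ltn_trans jk kp.
Qed.

Lemma enum_lt_inv j k : j < p -> n j < n k -> j < k.
Proof.
move=> jp; apply: contraTT; rewrite -!leqNgt leq_eqVlt => /orP[/eqP->//|kj].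
exact/ltnW/enum_incr.
Qed.

Lemma enum_mem k : k < p -> X (n k).
Proof.
move=> kp; have := mem_nth 0 (_ : k < size s).
by rewrite mem_filter size_s => /(_ kp) /andP[].
Qed.

Lemma mem_enum x : X x -> exists2 k, k < p & x = n k.
Proof.
move=> Xx; have [[X_set _ _ _] _] := X_min; have /andP[_ xF] := SatSet_bound X_set Xx.
have xs : x \in s by rewrite mem_filter Xx mem_iota ltnS.
by exists (index x s); rewrite ?nth_index // -size_s index_mem.
Qed.

Lemma enum_gt0 k : k < p -> 0 < n k.
Proof.
move=> kp; have [[X_set _ _ _] _] := X_min.
by case/andP: (SatSet_bound X_set (enum_mem kp)).
Qed.

Lemma enum_ltF k : k < p -> n k < F.
Proof.
move=> kp; have [[X_set [_ _ [nSF _]] XS _] _] := X_min.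
have /andP[_ nF] := SatSet_bound X_set (enum_mem kp).
by rewrite ltn_neqAle nF andbT; apply: contraNneq nSF => <-; apply: XS; apply: enum_mem.
Qed.

Lemma enum_mono j k : j <= k -> k < p -> n j <= n k.
Proof. by rewrite leq_eqVlt => /orP[/eqP->//|jk] kp; apply/ltnW/enum_incr. Qed.

Lemma enum_next k x : k < p -> n k < x -> X x -> k.+1 < p /\ n k.+1 <= x.
Proof.
move=> kp kx /mem_enum[j jp xE]; rewrite xE in kx *.
by have kj := enum_lt_inv kp kx; split; [exact: leq_ltn_trans kj jp | apply: enum_mono].
Qed.

Lemma enum_first x : X x -> n 0 <= x.
Proof. by case/mem_enum=> j jp ->; apply: enum_mono. Qed.

Lemma dA_below_first : dA X (n 0).-1 = 0.
Proof.
rewrite (@dA_const _ 0) ?dA0 // => x /andP[_ xn]; apply/negP => /enum_first.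
by rewrite leqNgt (leq_ltn_trans xn) // ltn_predL enum_gt0.
Qed.

Lemma dA_before_next k : k.+1 < p -> dA X (n k.+1).-1 = d k.
Proof.
move=> kp; have lt_next := enum_incr (ltnSn k) kp.
have n_pos := enum_gt0 kp.
apply: dA_const; first by rewrite -ltnS prednK.
move=> x /andP[kx xn]; apply/negP => /(enum_next (ltnW kp) kx)[_].
by rewrite leqNgt (leq_ltn_trans xn) // ltn_predL.
Qed.

Lemma dA_F : dA X F = d p.-1.
Proof.
have pp : p.-1 < p by rewrite prednK.
apply: dA_const; first exact/ltnW/enum_ltF.
by move=> x /andP[px _]; apply/negP => /(enum_next pp px)[]; rewrite prednK ?ltnn.
Qed.

Lemma gcd_first : d 0 = n 0.
Proof. by rewrite dA_mem ?enum_mem ?enum_gt0 // dA_below_first gcd0n. Qed.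

Lemma gcd_next k : k.+1 < p -> d k.+1 = gcdn (d k) (n k.+1).
Proof. by move=> kp; rewrite dA_mem ?enum_mem ?enum_gt0 // dA_before_next. Qed.

Lemma gcd_gt0 k : k < p -> 0 < d k.
Proof. by move=> kp; apply: dA_gt0 (enum_mem kp) (enum_gt0 kp). Qed.

Lemma gcd_dvd k : k.+1 < p -> d k.+1 %| d k.
Proof. by move=> kp; rewrite gcd_next ?dvdn_gcdl. Qed.

(* Non-redundancy of n_(k+1): d_k does not divide n_(k+1). *)
Lemma gcd_ndvd_next k : k.+1 < p -> ~~ (d k %| n k.+1).
Proof.
move=> kp; have := minimal_nonredundant X_min (enum_mem kp).
by rewrite /redundant dA_before_next // gcd_gt0 // ltnW.
Qed.

Lemma gcd_decr k : k.+1 < p -> d k.+1 < d k.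
Proof.
move=> kp; rewrite ltn_neqAle dvdn_leq ?gcd_dvd ?gcd_gt0 ?(ltnW kp) // andbT.
by apply: contraNneq (gcd_ndvd_next kp) => <-; rewrite gcd_next ?dvdn_gcdr.
Qed.

(* F is not in S = closure F X, so d_(p-1) does not divide F. *)
Lemma gcd_last : ~~ (d p.-1 %| F).
Proof.
have [[_ [_ _ [nSF _]] _ _] _] := X_min.
apply: contraNN nSF => dF; rewrite (SatGen_closure X_gen) /closure dA_F dF.
by rewrite gcd_gt0 ?prednK // !orbT.
Qed.

Let t (k : nat) : nat := if k is k'.+1 then (n k - n k') %/ d k else 1.

Lemma gcd_dvd_step k : k.+1 < p -> d k.+1 %| n k.+1 - n k.
Proof.
move=> kp; apply: dvdn_sub; first exact: dA_dvd (enum_mem kp).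
exact: dvdn_trans (gcd_dvd kp) (dA_dvd _ (enum_mem (ltnW kp))).
Qed.

Lemma enum_step k : k.+1 < p -> n k.+1 = n k + t k.+1 * d k.+1.
Proof. by move=> kp; rewrite /= divnK ?gcd_dvd_step // subnKC // ltnW ?enum_incr. Qed.

Lemma partial_sum_enum k : k < p -> partial_sum (fun i => d i) t k = n k.
Proof.
elim: k => [|k IH] kp; first by rewrite /partial_sum big_ord1 mul1n gcd_first.
by rewrite partial_sumS IH ?(ltnW kp) // -enum_step.
Qed.

Lemma t_gt0 k : k < p -> 0 < t k.
Proof.
case: k => // k kp; rewrite divn_gt0 ?gcd_gt0 // dvdn_leq ?gcd_dvd_step //.
by rewrite subn_gt0 enum_incr.
Qed.

(* d_(k+1) = gcd(d_k, n_k + t_(k+1) d_(k+1)) = d_(k+1) gcd(d_k/d_(k+1), t_(k+1))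
   since d_k divides n_k. *)
Lemma t_coprime k : k.+1 < p -> gcdn (d k %/ d k.+1) (t k.+1) = 1.
Proof.
move=> kp; have gE : d k.+1 = gcdn (d k) (n k + t k.+1 * d k.+1).
  by rewrite {1}gcd_next // -enum_step.
have D_gt0 := gcd_gt0 kp; have Dk_dvd := dA_dvd (leqnn _) (enum_mem (ltnW kp)).
have /divnK DkE := gcd_dvd kp.
move: gE Dk_dvd DkE; set D := d k.+1; set Dk := d k; set N := n k; set T := t k.+1.
set m := Dk %/ D => gE /divnK NE DkE.
have : D = gcdn m T * D by rewrite {1}gE -NE -!DkE mulnA -mulnDl -muln_gcdl gcdnMDl.
by rewrite -{1}[D]mul1n => /eqP; rewrite eqn_pmul2r // eq_sym => /eqP.
Qed.

Lemma gen_elt_enum k : k < p -> gen_elt (fun i => d i) t k = n k.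
Proof. by case: k => [_|k kp]; [exact: gcd_first | exact: partial_sum_enum]. Qed.

Lemma minimal_gens_form :
  exists d t : nat -> nat,
    [/\ SatSeq F p d, (forall i, i < p -> 0 < t i), \sum_(i < p) t i * d i < F,
        (forall i, i.+1 < p -> gcdn (d i %/ d i.+1) (t i.+1) = 1) & X =1 gens p d t].
Proof.
have pp : p.-1 < p by rewrite prednK.
exists (fun k => d k), t; split.
- by split; [exact: gcd_gt0 | exact: gcd_decr | exact: gcd_dvd | exact: gcd_last].
- exact: t_gt0.
- by rewrite (sum_partial (fun k => d k) t p_gt0) partial_sum_enum ?enum_ltF.
- exact: t_coprime.
move=> x; apply/idP/(gensP _ _ _ p_gt0) => [/mem_enum[k kp ->]|[k kp ->]].
  by exists k; rewrite ?gen_elt_enum.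
by rewrite gen_elt_enum ?enum_mem.
Qed.

End Converse.

(* Theorem 4.9: both halves, the rank being transported through the uniqueness
   of minimal systems. *)
Theorem theorem49 (F p : nat) (hF : 0 < F) (hp : 0 < p) :
  (forall d t : nat -> nat,
     SatSeq F p d ->
     (forall i, i < p -> 0 < t i) ->
     \sum_(i < p) t i * d i < F ->
     (forall i, i.+1 < p -> gcdn (d i %/ d i.+1) (t i.+1) = 1) ->
     exists S : pred nat,
       [/\ inSat F S, minimal_SatGen F (gens p d t) S & Sat_rank F S p])
  /\
  (forall S X : pred nat,
     inSat F S -> Sat_rank F S p -> minimal_SatGen F X S ->
     exists d t : nat -> nat,
       [/\ SatSeq F p d,
           (forall i, i < p -> 0 < t i),
           \sum_(i < p) t i * d i < F,
           (forall i, i.+1 < p -> gcdn (d i %/ d i.+1) (t i.+1) = 1) &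
           X =1 gens p d t]).
Proof.
split=> [d t [d_gt0 d_decr d_dvd d_last] t_gt0 sum_ltF t_coprime|S X _ [Y [Y_min Y_card]] X_min].
  exact: gens_minimal_rank.
apply: (minimal_gens_form hp X_min).
by rewrite -Y_card; apply: eq_count; apply: minimal_unique X_min Y_min.
Qed.
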